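(* Let $m,n,L\ge 2$ be integers. If $\beta=(\pi_\ell)_{\ell=1}^L$, $\pi_\ell=(a_\ell,b_\ell,c_\ell,d_\ell)$, is a chainable architecture such that $\mathcal{B}^\beta$ consists of $m\times n$ matrices and contains at least one matrix all of whose entries are nonzero, then there exist positive integers $q_1,\dots,q_L$ with $m=\prod_{\ell=1}^Lq_\ell$, $p_1,\dots,p_L$ with $n=\prod_{\ell=1}^Lp_\ell$, and $r_1,\dots,r_{L-1}$ such that, with the convention $r_0=r_L=1$, for each $1\le\ell\le L$: $$a_\ell=\prod_{j=1}^{\ell-1}p_j,\quad d_\ell=\prod_{j=\ell+1}^Lq_j,\quad b_\ell=q_\ell r_{\ell-1},\quad c_\ell=p_\ell r_\ell.$$ Conversely, any architecture defined by these formulas from positive integers $p_\ell,q_\ell,r_\ell$ with $n=\prod_\ell p_\ell$ and $m=\prod_\ell q_\ell$ is chainable and $\mathcal{B}^\beta\subseteq\mathbb{R}^{m\times n}$ (real matrices) contains at least one matrix with all entries nonzero. Such an architecture is non-redundant if and only if $r_1<q_1$, $r_{L-1}<p_L$, and $\frac{1}{p_\ell}<\frac{r_\ell}{r_{\ell-1}}<q_\ell$ for all $2\le\ell\le L-1$.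
   Context: A pattern is a tuple $\pi=(a,b,c,d)$ of positive integers; $\mathbf{S}_\pi:=\mathbf{I}_a\otimes\mathbf{1}_{b\times c}\otimes\mathbf{I}_d\in\{0,1\}^{abd\times acd}$. A $\pi$-factor is a matrix of size $abd\times acd$ with support contained in that of $\mathbf{S}_\pi$. Patterns $\pi=(a,b,c,d),\pi'=(a',b',c',d')$ are chainable if $ac/a'=b'd'/d=:r(\pi,\pi')$ is an integer, $a\mid a'$, $d'\mid d$; a chainable pair is redundant if $r(\pi,\pi')\ge\min(b,c')$. An architecture $\beta=(\pi_\ell)_{\ell=1}^L$ is a sequence of patterns with $a_\ell c_\ell d_\ell=a_{\ell+1}b_{\ell+1}d_{\ell+1}$; it is chainable if every consecutive pair is chainable, and (if chainable) redundant if some consecutive pair is redundant. $\mathcal{B}^\beta:=\{\mathbf{X}_1\cdots\mathbf{X}_L:\mathbf{X}_\ell\text{ a }\pi_\ell\text{-factor}\}$. *)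

From HB Require Import structures.
From mathcomp Require Import all_boot all_order all_algebra.
From mathcomp Require Import reals.
Set Implicit Arguments. Unset Strict Implicit. Unset Printing Implicit Defensive.
Import Order.TTheory GRing.Theory Num.Theory.

Record pattern := Pattern { pa : nat; pb : nat; pc : nat; pd : nat }.

Definition pos_pattern (p : pattern) : bool :=
  [&& 0 < pa p, 0 < pb p, 0 < pc p & 0 < pd p].

(* S_pi = I_a (x) 1_{b x c} (x) I_d has size (abd) x (acd).  With the standard
   Kronecker index convention, row index i = (ia*b + ib)*d + id and column index
   j = (ja*c + jc)*d + jd, and S_pi i j = 1 iff ia = ja and id = jd. *)
Definition nrows (p : pattern) := pa p * pb p * pd p.
Definition ncols (p : pattern) := pa p * pc p * pd p.
Definition S_entry (p : pattern) (i j : nat) : bool :=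
  (i %/ (pb p * pd p) == j %/ (pc p * pd p)) && (i %% pd p == j %% pd p).

(* A pi-factor: a (abd) x (acd) real matrix (entries given by a function on
   indices; only indices i < abd, j < acd are meaningful) whose support is
   contained in that of S_pi. *)
Definition is_factor {R : realType} (p : pattern) (X : nat -> nat -> R) : Prop :=
  forall i j, i < nrows p -> j < ncols p -> X i j != 0%R -> S_entry p i j.

Definition is_architecture (L : nat) (beta : nat -> pattern) : Prop :=
  (forall l, 1 <= l <= L -> pos_pattern (beta l)) /\
  (forall l, 1 <= l < L -> ncols (beta l) = nrows (beta l.+1)).

Definition chainable_pair (p p' : pattern) : Prop :=
  exists r : nat, pa p * pc p = r * pa p' /\ pb p' * pd p' = r * pd p /\
                  (pa p %| pa p') /\ (pd p' %| pd p).

Definition ratio (p p' : pattern) : nat := (pa p * pc p) %/ pa p'.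

Definition redundant_pair (p p' : pattern) : Prop :=
  chainable_pair p p' /\ minn (pb p) (pc p') <= ratio p p'.

Definition chainable_arch (L : nat) (beta : nat -> pattern) : Prop :=
  forall l, 1 <= l < L -> chainable_pair (beta l) (beta l.+1).

Definition redundant_arch (L : nat) (beta : nat -> pattern) : Prop :=
  chainable_arch L beta /\ exists l, 1 <= l < L /\ redundant_pair (beta l) (beta l.+1).

Fixpoint chain_prod {R : realType} (beta : nat -> pattern)
    (X : nat -> nat -> nat -> R) (k : nat) : nat -> nat -> R :=
  match k with
  | 0 => fun i j => ((i == j)%:R)%R
  | k'.+1 => fun i j =>
      (\sum_(t < nrows (beta k'.+1)) chain_prod beta X k' i t * X k'.+1 t j)%R
  end.

Definition in_B {R : realType} (L : nat) (beta : nat -> pattern) (m n : nat)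
    (M : 'M[R]_(m, n)) : Prop :=
  exists X : nat -> nat -> nat -> R,
    (forall l, 1 <= l <= L -> is_factor (beta l) (X l)) /\
    (forall (i : 'I_m) (j : 'I_n), M i j = chain_prod beta X L i j).

Definition arch_of (L : nat) (p q r : nat -> nat) : nat -> pattern :=
  fun l => Pattern (\prod_(1 <= j < l) p j) (q l * r l.-1) (p l * r l)
                   (\prod_(l.+1 <= j < L.+1) q j).

From Pilot Require Import Defs.
From HB Require Import structures.
From mathcomp Require Import all_boot all_order all_algebra.
From mathcomp Require Import reals.
From mathcomp Require Import zify ring.
Import Order.TTheory GRing.Theory Num.Theory.

Set Implicit Arguments.
Unset Strict Implicit.
Unset Printing Implicit Defensive.

(* A pi_l-factor only connects a row t to a column j when t and j
   lie in the same one of the a_l diagonal blocks and t = j mod d_l.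
   Chainability gives a_1 | a_l and d_L | d_l, so every product X_1 ... X_L
   preserves both the index of the a_1 coarse blocks and the residue mod d_L;
   a product without zero entries therefore forces a_1 = d_L = 1.  From these
   boundary values the chain equations a_l c_l = r_l a_(l+1) and
   b_(l+1) d_(l+1) = r_l d_l telescope into the stated formulas, with
   p_l = a_(l+1) / a_l and q_(l+1) = d_l / d_(l+1).
   Conversely, the product of the 0/1 matrices S_(pi_l) is positive at (i, j)
   as soon as i = j mod q_(k+1) ... q_L, which for k = L is every entry; and
   the ratio of consecutive patterns is r_l, so redundancy of the pair at l
   reads min (q_l r_(l-1)) (p_(l+1) r_(l+1)) <= r_l. *)

Lemma pos_pattern_dims p : pos_pattern p -> 0 < nrows p /\ 0 < ncols p.
Proof.
by case/and4P=> a_gt0 b_gt0 c_gt0 d_gt0; rewrite !muln_gt0 a_gt0 b_gt0 c_gt0 d_gt0.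
Qed.

Lemma S_entry_mod (p : pattern) D t j :
  D %| pd p -> S_entry p t j -> t %% D = j %% D.
Proof.
move=> Dd /andP[_ /eqP tj].
by rewrite -(modn_dvdm t Dd) tj (modn_dvdm j Dd).
Qed.

Lemma S_entry_block (p : pattern) e t j : e %| pa p -> S_entry p t j ->
  t %/ (nrows p %/ e) = j %/ (ncols p %/ e).
Proof.
move=> ea /andP[/eqP tj _].
rewrite /nrows /ncols -!mulnA -!divn_mulAC // ![_ %/ e * _]mulnC.
by rewrite [LHS]divnMA [RHS]divnMA tj.
Qed.

Lemma S_entry_row_witness (p : pattern) j s :
  j < ncols p -> s < pb p * pd p -> s %% pd p = j %% pd p ->
  let t := j %/ (pc p * pd p) * (pb p * pd p) + s in
  t < nrows p /\ S_entry p t j.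
Proof.
move=> jn sb sj t; have cd_gt0 : 0 < pc p * pd p.
  by move: jn; rewrite /ncols -mulnA; case: (pc p * pd p) => //; rewrite muln0.
have bd_gt0 : 0 < pb p * pd p by case: (pb p * pd p) sb.
split.
  have ja : j %/ (pc p * pd p) < pa p by rewrite ltn_divLR // mulnA.
  rewrite /t /nrows -mulnA.
  apply: (@leq_trans ((j %/ (pc p * pd p)).+1 * (pb p * pd p))).
    by rewrite mulSn addnC ltn_add2r.
  by rewrite leq_mul2r ja orbT.
rewrite /S_entry /t divnMDl // (divn_small sb) addn0 eqxx /=.
by rewrite mulnA modnMDl sj.
Qed.

Lemma chainable_pairE p p' :
  pos_pattern p -> pos_pattern p' -> chainable_pair p p' ->
  [/\ pa p' = pa p * (pa p' %/ pa p), pc p = (pa p' %/ pa p) * Defs.ratio p p',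
      pd p = (pd p %/ pd p') * pd p' & pb p' = (pd p %/ pd p') * Defs.ratio p p'].
Proof.
move=> /and4P[a_gt0 _ _ _] /and4P[a'_gt0 _ _ d_gt0].
move=> [r [acE [bdE [/dvdnP[x aE] /dvdnP[y dE]]]]].
have rE : Defs.ratio p p' = r by rewrite /Defs.ratio acE mulnK.
rewrite rE aE dE !mulnK //; split=> //; first exact: mulnC.
  by apply/eqP; rewrite -(eqn_pmul2l a_gt0) acE aE; apply/eqP; ring.
by apply/eqP; rewrite -(eqn_pmul2r d_gt0) bdE dE; apply/eqP; ring.
Qed.

Definition arch_dim (beta : nat -> pattern) (k : nat) : nat :=
  if k is 0 then nrows (beta 1) else ncols (beta k).

Lemma arch_dimE beta k : 0 < k -> arch_dim beta k = ncols (beta k).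
Proof. by case: k. Qed.

Lemma arch_dim_nrows L beta k :
  is_architecture L beta -> k < L -> arch_dim beta k = nrows (beta k.+1).
Proof. by case=> _ dimE; case: k => [|k] //= kL; apply: dimE; rewrite kL. Qed.

Section ChainProduct.
Variables (R : realType) (beta : nat -> pattern) (X : nat -> nat -> nat -> R).
Local Notation P := (chain_prod beta X).

Lemma chain_prodS_neq0 k i j : P k.+1 i j != 0%R ->
  exists2 t, t < nrows (beta k.+1) & (P k i t != 0)%R /\ (X k.+1 t j != 0)%R.
Proof.
move=> /= Pij; have /existsP[t] : [exists t : 'I_(nrows (beta k.+1)),
                                    P k i t * X k.+1 t j != 0]%R.
  apply: contraR Pij => /existsPn Pt0; rewrite big1 // => t _.
  exact/eqP/negbNE/Pt0.
by rewrite mulf_eq0 negb_or => /andP[]; exists t.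
Qed.

Lemma chain_prod_ge0 : (forall l t j, 0 <= X l t j)%R ->
  forall k i j, (0 <= P k i j)%R.
Proof.
move=> X_ge0; elim=> [|k IH] i j /=; first exact: ler0n.
by apply: sumr_ge0 => t _; apply: mulr_ge0.
Qed.

Lemma chain_prodS_gt0 k i j t : (forall l t j, 0 <= X l t j)%R ->
  t < nrows (beta k.+1) -> (0 < P k i t)%R -> (0 < X k.+1 t j)%R ->
  (0 < P k.+1 i j)%R.
Proof.
move=> X_ge0 tn Pt Xt; rewrite /= (bigD1 (Ordinal tn)) //=.
apply: ltr_pwDl; first exact: mulr_gt0.
by apply: sumr_ge0 => s _; apply: mulr_ge0 => //; apply: chain_prod_ge0.
Qed.

Variable L : nat.
Hypotheses (beta_arch : is_architecture L beta)
           (X_factor : forall l, 1 <= l <= L -> is_factor (beta l) (X l)).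

Lemma chain_prod_support_inv (f : nat -> nat -> nat) :
  (forall l t j, 1 <= l <= L -> t < nrows (beta l) -> j < ncols (beta l) ->
     S_entry (beta l) t j -> f l.-1 t = f l j) ->
  forall k i j, k <= L -> j < arch_dim beta k -> P k i j != 0%R -> f 0 i = f k j.
Proof.
move=> f_inv; elim=> [|k IH] i j kL jk.
  by rewrite /=; case: (i =P j) => [->|_] //; rewrite mulr0n eqxx.
case/chain_prodS_neq0 => t tn [Pt Xt].
have kL' : 1 <= k.+1 <= L by [].
have tk : t < arch_dim beta k by rewrite (arch_dim_nrows beta_arch).
rewrite (IH i t (ltnW kL) tk Pt).
exact: f_inv kL' tn jk (X_factor kL' tn jk Xt).
Qed.

End ChainProduct.

Lemma prodn_of_recr (A p : nat -> nat) a b : a <= b ->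
  (forall l, a <= l < b -> A l.+1 = A l * p l) ->
  A b = A a * \prod_(a <= j < b) p j.
Proof.
elim: b => [|b IH]; first by rewrite leqn0 => /eqP-> _; rewrite big_geq ?muln1.
rewrite leq_eqVlt ltnS => /orP[/eqP-> _|ab AE]; first by rewrite big_geq ?muln1.
rewrite big_nat_recr //= mulnA -IH ?AE ?ab ?ltnSn // => l /andP[al lb].
by rewrite AE // al ltnW.
Qed.

Lemma prodn_of_recl (D q : nat -> nat) a b : a <= b ->
  (forall l, a <= l < b -> D l = q l.+1 * D l.+1) ->
  D a = \prod_(a.+1 <= j < b.+1) q j * D b.
Proof.
elim: b => [|b IH]; first by rewrite leqn0 => /eqP-> _; rewrite big_geq ?mul1n.
rewrite leq_eqVlt ltnS => /orP[/eqP-> _|ab DE]; first by rewrite big_geq ?mul1n.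
rewrite big_nat_recr //= -mulnA -DE ?ab ?ltnSn // IH // => l /andP[al lb].
by rewrite DE // al ltnW.
Qed.

Section ArchitectureShape.
Variables (L : nat) (beta : nat -> pattern).
Hypotheses (beta_arch : is_architecture L beta) (beta_chain : chainable_arch L beta).

Lemma arch_pairE l : 1 <= l < L ->
  let p := beta l in let p' := beta l.+1 in
  [/\ pa p' = pa p * (pa p' %/ pa p), pc p = (pa p' %/ pa p) * Defs.ratio p p',
      pd p = (pd p %/ pd p') * pd p' & pb p' = (pd p %/ pd p') * Defs.ratio p p'].
Proof.
case/andP=> l_gt0 lL; case: beta_arch => pos _.
apply: chainable_pairE; first by apply: pos; rewrite l_gt0 ltnW.
  exact: pos.
by apply: beta_chain; rewrite l_gt0.
Qed.

Local Notation in_range := [pred k | 0 < k <= L].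

Let in_range_convex : {in in_range &, forall i j k, i < k < j -> k \in in_range}.
Proof.
move=> i j; rewrite !inE => /andP[i_gt0 _] /andP[_ jL] k /andP[ik kj].
by rewrite inE /=; lia.
Qed.

Lemma dvdn_pa1 l : 1 <= l <= L -> pa (beta 1) %| pa (beta l).
Proof.
move=> /andP[l_gt0 lL].
apply: (@homo_leq_in _ in_range (pa \o beta) dvdn dvdnn _ in_range_convex) => //.
- by move=> ???; apply: dvdn_trans.
- move=> k; rewrite !inE /= => /andP[k_gt0 _] kL.
  by case: (@arch_pairE k) => [|-> _ _ _]; rewrite ?k_gt0 ?dvdn_mulr.
all: by rewrite !inE /= ?l_gt0 ?lL ?leqnn ?(leq_trans l_gt0 lL).
Qed.

Lemma dvdn_pdL l : 1 <= l <= L -> pd (beta L) %| pd (beta l).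
Proof.
move=> /andP[l_gt0 lL].
apply: (@homo_leq_in _ in_range (pd \o beta) (fun x y => y %| x) dvdnn _
          in_range_convex) => //.
- by move=> ??? yx zy; apply: dvdn_trans zy yx.
- move=> k; rewrite !inE /= => /andP[k_gt0 _] kL.
  by case: (@arch_pairE k) => [|_ _ -> _]; rewrite ?k_gt0 ?dvdn_mull.
all: by rewrite !inE /= ?l_gt0 ?lL ?leqnn ?(leq_trans l_gt0 lL).
Qed.

Section FullSupport.
Variables (R : realType) (X : nat -> nat -> nat -> R).
Hypotheses (L_gt0 : 0 < L)
           (X_factor : forall l, 1 <= l <= L -> is_factor (beta l) (X l))
           (X_full : forall i j, i < nrows (beta 1) -> j < ncols (beta L) ->
                       chain_prod beta X L i j != 0%R).

Let nrows1_gt0 : 0 < nrows (beta 1).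
Proof. by case: (pos_pattern_dims (beta_arch.1 1 _)) => //; rewrite L_gt0. Qed.

Let ncolsL_gt0 : 0 < ncols (beta L).
Proof. by case: (pos_pattern_dims (beta_arch.1 L _)) => //; rewrite L_gt0 leqnn. Qed.

Lemma pdL_eq1 : 1 < ncols (beta L) -> pd (beta L) = 1.
Proof.
move=> n_gt1.
have f_inv l t j : 1 <= l <= L -> t < nrows (beta l) -> j < ncols (beta l) ->
    S_entry (beta l) t j -> t %% pd (beta L) = j %% pd (beta L).
  by move=> lL _ _; apply: S_entry_mod (dvdn_pdL lL).
have := chain_prod_support_inv beta_arch X_factor f_inv (leqnn L) _
          (X_full nrows1_gt0 n_gt1).
rewrite arch_dimE // mod0n => /(_ n_gt1) /esym /eqP.
by rewrite -/(_ %| 1) dvdn1 => /eqP.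
Qed.

(* The nonzero entry (0, n - 1) makes the first coarse block as wide as the
   whole matrix. *)
Lemma pa1_eq1 : pa (beta 1) = 1.
Proof.
set a1 := pa (beta 1); set n := ncols (beta L).
have f_inv l t j : 1 <= l <= L -> t < nrows (beta l) -> j < ncols (beta l) ->
    S_entry (beta l) t j ->
    t %/ (arch_dim beta l.-1 %/ a1) = j %/ (arch_dim beta l %/ a1).
  move=> lL _ _; case/andP: (lL) => l_gt0 _.
  rewrite (arch_dim_nrows beta_arch) ?prednK ?arch_dimE //; last lia.
  exact: S_entry_block (dvdn_pa1 lL).
have n_pred : n.-1 < n by rewrite prednK.
have := chain_prod_support_inv beta_arch X_factor f_inv (leqnn L) _
          (X_full nrows1_gt0 n_pred).
rewrite arch_dimE // div0n -/n => /(_ n_pred) /esym /eqP.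
have a1_gt0 : 0 < a1 by move: (beta_arch.1 1); rewrite L_gt0 => /(_ isT) /and4P[].
have /dvdnP[k nE] : a1 %| n.
  by rewrite /n /ncols -mulnA dvdn_mulr // dvdn_pa1 // L_gt0 leqnn.
have k_gt0 : 0 < k by move: ncolsL_gt0; rewrite -/n nE muln_gt0 => /andP[].
by rewrite nE mulnK // -leqn0 leqNgt divn_gt0 // -ltnNge; nia.
Qed.

End FullSupport.

Lemma arch_eq_arch_of : 0 < L -> pa (beta 1) = 1 -> pd (beta L) = 1 ->
  exists p q r : nat -> nat,
    [/\ forall l, 1 <= l <= L -> 0 < p l /\ 0 < q l,
        forall l, 1 <= l < L -> 0 < r l, r 0 = 1, r L = 1 &
        forall l, 1 <= l <= L -> beta l = arch_of L p q r l].
Proof.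
move=> L_gt0 a1 dL.
pose p l := if l < L then pa (beta l.+1) %/ pa (beta l) else pc (beta L).
pose q l := if l == 1 then pb (beta 1) else pd (beta l.-1) %/ pd (beta l).
pose r l := if 0 < l < L then Defs.ratio (beta l) (beta l.+1) else 1.
have pairE l : 1 <= l < L ->
    [/\ pa (beta l.+1) = pa (beta l) * p l, pc (beta l) = p l * r l,
        pd (beta l) = q l.+1 * pd (beta l.+1) & pb (beta l.+1) = q l.+1 * r l].
  move=> lL; case/andP: (lL) => l_gt0 l_lt.
  by rewrite /p /q /r lL l_lt gtn_eqF //=; apply: arch_pairE.
have aE l : 1 <= l <= L -> pa (beta l) = \prod_(1 <= j < l) p j.
  case/andP=> l_gt0 lL.
  rewrite (@prodn_of_recr (fun k => pa (beta k)) p 1 l) ?a1 ?mul1n // => k.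
  by case/andP=> k_gt0 kl; case: (pairE k) => //; rewrite k_gt0 (leq_trans kl lL).
have dE l : 1 <= l <= L -> pd (beta l) = \prod_(l.+1 <= j < L.+1) q j.
  case/andP=> l_gt0 lL.
  rewrite (@prodn_of_recl (fun k => pd (beta k)) q l L) ?dL ?muln1 // => k.
  by case/andP=> lk kL; case: (pairE k) => //; rewrite kL (leq_trans l_gt0 lk).
have bE l : 1 <= l <= L -> pb (beta l) = q l * r l.-1.
  case: l => [|[|l]] // lL; first by rewrite /q /r muln1.
  by case: (pairE l.+1).
have cE l : 1 <= l <= L -> pc (beta l) = p l * r l.
  case/andP=> l_gt0; rewrite leq_eqVlt => /orP[/eqP->|lL].
    by rewrite /p /r ltnn andbF muln1.
  by case: (pairE l) => //; rewrite l_gt0.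
exists p, q, r; split=> //.
- move=> l lL; have /and4P[_ b_gt0 c_gt0 _] := beta_arch.1 l lL.
  by move: b_gt0 c_gt0; rewrite bE // cE // !muln_gt0 => /andP[-> _] /andP[-> _].
- move=> l /andP[l_gt0 lL]; have lL' : 1 <= l <= L by rewrite l_gt0 ltnW.
  by have /and4P[_ _ + _] := beta_arch.1 l lL'; rewrite cE // muln_gt0 => /andP[].
- by rewrite /r ltnn andbF.
- move=> l lL; rewrite /arch_of -aE // -bE // -cE // -dE //.
  by case: (beta l).
Qed.

End ArchitectureShape.

Lemma ltr_inv_ratio (F : numFieldType) (x a b : nat) : 0 < x -> 0 < a ->
  (1 / x%:R < b%:R / a%:R :> F)%R = (a < x * b).
Proof.
move=> x_gt0 a_gt0.
by rewrite ltr_pdivlMr ?ltr0n // mul1r ltr_pdivrMl ?ltr0n // -natrM ltr_nat.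
Qed.

Lemma ltr_ratio_nat (F : numFieldType) (x a b : nat) : 0 < a ->
  (b%:R / a%:R < x%:R :> F)%R = (b < x * a).
Proof. by move=> a_gt0; rewrite ltr_pdivrMr ?ltr0n // -natrM ltr_nat. Qed.

Lemma split_range_conds (P Q : nat -> Prop) L : 2 <= L ->
  (forall l, 1 <= l < L -> P l) /\ (forall l, 1 <= l < L -> Q l.+1) <->
  [/\ P 1, Q L & forall l, 2 <= l <= L.-1 -> Q l /\ P l].
Proof.
move=> L_ge2; split=> [[PL QL]|[P1 QL PQ]].
  split=> [||l lL]; first by apply: PL; lia.
    have -> : L = L.-1.+1 by lia.
    by apply: QL; lia.
  split; last by apply: PL; lia.
  have -> : l = l.-1.+1 by lia.
  by apply: QL; lia.
split=> l lL.
  have [->|l_gt1] : l = 1 \/ 1 < l by lia.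
    by [].
  by apply: (PQ l _).2; lia.
have [->|l_lt] : l.+1 = L \/ l.+1 < L by lia.
  by [].
by apply: (PQ l.+1 _).1; lia.
Qed.

Definition S_mx (R : realType) (p : pattern) (i j : nat) : R := (S_entry p i j)%:R.

Lemma S_mx_factor (R : realType) p : is_factor p (S_mx R p).
Proof. by move=> i j _ _; rewrite /S_mx; case: S_entry; rewrite ?eqxx. Qed.

Definition arch_of_dim L (p q r : nat -> nat) k :=
  \prod_(1 <= j < k.+1) p j * r k * \prod_(k.+1 <= j < L.+1) q j.

Section ArchOf.
Variables (L : nat) (p q r : nat -> nat).
Local Notation beta := (arch_of L p q r).
Local Notation dim := (arch_of_dim L p q r).

Lemma nrows_arch_of k : k < L -> nrows (beta k.+1) = dim k.
Proof.
move=> kL; rewrite /nrows /arch_of_dim /=.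
by rewrite [\prod_(k.+1 <= j < L.+1) q j]big_ltn //; ring.
Qed.

Lemma ncols_arch_of k : 0 < k -> ncols (beta k) = dim k.
Proof.
move=> k_gt0; rewrite /ncols /arch_of_dim /=.
by rewrite [\prod_(1 <= j < k.+1) p j]big_nat_recr //=; ring.
Qed.

Lemma arch_of_dim0 : r 0 = 1 -> dim 0 = \prod_(1 <= l < L.+1) q l.
Proof. by move=> r0; rewrite /arch_of_dim big_geq // r0 !mul1n. Qed.

Lemma arch_of_dimL : r L = 1 -> dim L = \prod_(1 <= l < L.+1) p l.
Proof.
by move=> rL; rewrite /arch_of_dim [\prod_(L.+1 <= _ < _) _]big_geq // rL !muln1.
Qed.

Lemma arch_of_chainable : chainable_arch L beta.
Proof.
move=> l /andP[l_gt0 lL]; exists (r l) => /=.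
rewrite big_nat_recr //= [\prod_(l.+1 <= j < L.+1) q j]big_ltn //.
by do !split; [ring | ring | apply: dvdn_mulr | apply: dvdn_mull].
Qed.

Hypotheses (pq_gt0 : forall l, 1 <= l <= L -> 0 < p l /\ 0 < q l)
           (r_gt0 : forall l, 1 <= l < L -> 0 < r l) (r0 : r 0 = 1) (rL : r L = 1).

Let r_pos l : l <= L -> 0 < r l.
Proof.
case: l => [_|l]; first by rewrite r0.
by rewrite leq_eqVlt => /orP[/eqP->|lL]; [rewrite rL | apply: r_gt0].
Qed.

Let prod_gt0 (f : nat -> nat) a b : (forall l, 1 <= l <= L -> 0 < f l) ->
  0 < a -> b <= L.+1 -> 0 < \prod_(a <= j < b) f j.
Proof.
move=> f_gt0 a_gt0 bL.
rewrite big_nat_cond prodn_cond_gt0 // => j /andP[/andP[aj jb] _].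
by apply: f_gt0; rewrite (leq_trans a_gt0 aj) -ltnS (leq_trans jb bL).
Qed.

Let p_gt0 l : 1 <= l <= L -> 0 < p l. Proof. by case/pq_gt0. Qed.
Let q_gt0 l : 1 <= l <= L -> 0 < q l. Proof. by case/pq_gt0. Qed.

Lemma arch_of_arch : is_architecture L beta.
Proof.
split=> l /andP[l_gt0 lL]; last by rewrite ncols_arch_of // nrows_arch_of.
rewrite /pos_pattern /= !muln_gt0 p_gt0 ?q_gt0 ?l_gt0 // !r_pos ?prod_gt0 //.
all: lia.
Qed.

Lemma ratio_arch_of l : 1 <= l < L -> Defs.ratio (beta l) (beta l.+1) = r l.
Proof.
case/andP=> l_gt0 lL; have lL1 : l <= L by apply: ltnW.
rewrite /Defs.ratio /= [\prod_(1 <= j < l.+1) p j]big_nat_recr //=.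
by rewrite mulnA [_ * r l]mulnC mulnK // muln_gt0 (prod_gt0 p_gt0) ?p_gt0 ?l_gt0 // ltnW.
Qed.

Lemma arch_of_nonredundantP : ~ redundant_arch L beta <->
  (forall l, 1 <= l < L -> r l < q l * r l.-1) /\
  (forall l, 1 <= l < L -> r l < p l.+1 * r l.+1).
Proof.
have redE l : 1 <= l < L -> redundant_pair (beta l) (beta l.+1) <->
    minn (q l * r l.-1) (p l.+1 * r l.+1) <= r l.
  move=> lL; rewrite /redundant_pair ratio_arch_of //=.
  by split=> [[] //|min_le]; split=> //; apply: arch_of_chainable.
split=> [nred|[qr pr] [_ [l [lL /(redE l lL)]]]].
  suff lt_min l : 1 <= l < L -> r l < minn (q l * r l.-1) (p l.+1 * r l.+1).
    by split=> l lL; have := lt_min l lL; rewrite leq_min => /andP[].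
  move=> lL; rewrite ltnNge; apply/negP => /(redE l lL) red.
  by apply: nred; split; [exact: arch_of_chainable | exists l].
by rewrite geq_min => /orP[]; apply/negP; rewrite -ltnNge; [apply: qr | apply: pr].
Qed.

Lemma arch_of_chain_prod_gt0 (R : realType) k i j :
  k <= L -> i < dim 0 -> j < dim k ->
  i %% \prod_(k.+1 <= l < L.+1) q l = j %% \prod_(k.+1 <= l < L.+1) q l ->
  (0 < chain_prod beta (fun l => S_mx R (beta l)) k i j)%R.
Proof.
have S_ge0 l t s : (0 <= S_mx R (beta l) t s)%R by exact: ler0n.
have dim0 := arch_of_dim0 r0.
rewrite dim0; elim: k i j => [|k IH] i j kL i_lt.
  by rewrite dim0 => j_lt; rewrite !modn_small //= => ->; rewrite eqxx ltr01.
rewrite -ncols_arch_of //.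
set Q := \prod_(k.+2 <= l < L.+1) q l => j_lt ij; set s := i %% (q k.+1 * Q).
have bdE : pb (beta k.+1) * pd (beta k.+1) = r k * (q k.+1 * Q) by rewrite /=; ring.
have qQ_gt0 : 0 < q k.+1 * Q by rewrite muln_gt0 q_gt0 ?prod_gt0.
have s_lt : s < pb (beta k.+1) * pd (beta k.+1).
  by rewrite bdE (leq_trans (ltn_pmod i qQ_gt0)) // leq_pmull // r_pos // ltnW.
have s_mod : s %% pd (beta k.+1) = j %% pd (beta k.+1).
  by rewrite /= -ij /s (modn_dvdm _ (dvdn_mull _ (dvdnn Q))).
have [t_lt t_S] := S_entry_row_witness j_lt s_lt s_mod.
apply: (chain_prodS_gt0 S_ge0 t_lt); last by rewrite /S_mx t_S ltr01.
apply: IH; rewrite ?(ltnW kL) // -?nrows_arch_of //.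
rewrite [\prod_(k.+1 <= l < L.+1) q l]big_ltn ?ltnS // -/Q bdE.
by rewrite [_ * (r k * _)]mulnA modnMDl modn_mod.
Qed.

Lemma arch_of_in_B_full (R : realType) m n : dim 0 = m -> dim L = n ->
  exists M : 'M[R]_(m, n), in_B L beta M /\ forall i j, M i j != 0%R.
Proof.
move=> m_dim n_dim.
exists (\matrix_(i < m, j < n) chain_prod beta (fun l => S_mx R (beta l)) L i j)%R.
split.
  exists (fun l => S_mx R (beta l)).
  by split=> [l _|i j]; [apply: S_mx_factor | rewrite mxE].
move=> i j; rewrite mxE lt0r_neq0 // arch_of_chain_prod_gt0 ?m_dim ?n_dim //.
by rewrite big_geq // !modn1.
Qed.

Lemma arch_of_nonredundant_ratioP : 2 <= L ->
  ~ redundant_arch L beta <->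
  [/\ r 1 < q 1, r L.-1 < p L &
      forall l, 2 <= l <= L.-1 ->
        (1 / (p l)%:R < (r l)%:R / (r l.-1)%:R :> rat)%R /\
        ((r l)%:R / (r l.-1)%:R < (q l)%:R :> rat)%R].
Proof.
move=> L_ge2; apply: iff_trans arch_of_nonredundantP _.
apply: iff_trans (split_range_conds (fun l => r l < q l * r l.-1)
                                    (fun l => r l.-1 < p l * r l) L_ge2) _.
rewrite r0 rL !muln1.
have midE l : 2 <= l <= L.-1 ->
    (1 / (p l)%:R < (r l)%:R / (r l.-1)%:R :> rat)%R /\
    ((r l)%:R / (r l.-1)%:R < (q l)%:R :> rat)%R <->
    r l.-1 < p l * r l /\ r l < q l * r l.-1.
  by move=> lL; rewrite ltr_inv_ratio ?ltr_ratio_nat ?p_gt0 ?q_gt0 ?r_pos //; lia.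
by split=> -[r1 rL1 mid]; split=> // l lL; apply/(midE l lL)/mid.
Qed.

End ArchOf.

Theorem lemma4p16 (R : realType) (m n L : nat) :
  2 <= m -> 2 <= n -> 2 <= L ->
  (* direct part *)
  (forall beta : nat -> pattern,
     is_architecture L beta -> chainable_arch L beta ->
     nrows (beta 1) = m -> ncols (beta L) = n ->
     (exists M : 'M[R]_(m, n), in_B L beta M /\ forall i j, M i j != 0%R) ->
     exists (p q r : nat -> nat),
       (forall l, 1 <= l <= L -> 0 < p l /\ 0 < q l) /\
       (forall l, 1 <= l < L -> 0 < r l) /\ r 0 = 1 /\ r L = 1 /\
       m = \prod_(1 <= l < L.+1) q l /\ n = \prod_(1 <= l < L.+1) p l /\
       (forall l, 1 <= l <= L ->
          [/\ pa (beta l) = \prod_(1 <= j < l) p j,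
              pd (beta l) = \prod_(l.+1 <= j < L.+1) q j,
              pb (beta l) = q l * r l.-1 &
              pc (beta l) = p l * r l])) /\
  (* converse part *)
  (forall p q r : nat -> nat,
     (forall l, 1 <= l <= L -> 0 < p l /\ 0 < q l) ->
     (forall l, 1 <= l < L -> 0 < r l) -> r 0 = 1 -> r L = 1 ->
     n = \prod_(1 <= l < L.+1) p l -> m = \prod_(1 <= l < L.+1) q l ->
     let beta := arch_of L p q r in
     [/\ is_architecture L beta /\ chainable_arch L beta,
         nrows (beta 1) = m, ncols (beta L) = n,
         (exists M : 'M[R]_(m, n), in_B L beta M /\ forall i j, M i j != 0%R) &
         (~ redundant_arch L beta <->
            [/\ r 1 < q 1, r L.-1 < p L &
                forall l, 2 <= l <= L.-1 ->
                  (1 / (p l)%:R < (r l)%:R / (r l.-1)%:R :> rat)%R /\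
                  ((r l)%:R / (r l.-1)%:R < (q l)%:R :> rat)%R])]).
Proof.
move=> _ n_ge2 L_ge2; have L_gt0 : 0 < L by apply: ltnW.
split=> [beta arch chain m_eq n_eq [M [[X [X_factor ME]] M_nz]]|].
  have X_full i j : i < nrows (beta 1) -> j < ncols (beta L) ->
      chain_prod beta X L i j != 0%R.
    rewrite m_eq n_eq => i_lt j_lt.
    by have := M_nz (Ordinal i_lt) (Ordinal j_lt); rewrite ME.
  have n_gt1 : 1 < ncols (beta L) by rewrite n_eq.
  have [p [q [r [pq_gt0 r_gt0 r0 rL betaE]]]] := arch_eq_arch_of arch chain L_gt0
    (pa1_eq1 arch chain L_gt0 X_factor X_full)
    (pdL_eq1 arch chain L_gt0 X_factor X_full n_gt1).
  exists p, q, r; do !split=> //; try by rewrite betaE.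
  - by rewrite -m_eq betaE ?nrows_arch_of ?arch_of_dim0 // L_gt0.
  - by rewrite -n_eq betaE ?ncols_arch_of ?arch_of_dimL // L_gt0 leqnn.
move=> p q r pq_gt0 r_gt0 r0 rL n_eq m_eq beta.
have m_dim : arch_of_dim L p q r 0 = m by rewrite arch_of_dim0.
have n_dim : arch_of_dim L p q r L = n by rewrite arch_of_dimL.
split.
- by split; [apply: arch_of_arch | apply: arch_of_chainable].
- by rewrite nrows_arch_of.
- by rewrite ncols_arch_of.
- exact: arch_of_in_B_full.
exact: arch_of_nonredundant_ratioP.
Qed.
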